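(* $\left\|\begin{bmatrix}1&1&1&1\\0&1&0&0\\0&0&1&0\\0&0&0&1\end{bmatrix}\right\|_\bullet>\left\|\begin{bmatrix}1&1&0\\1&1&1\\0&1&0\end{bmatrix}\right\|_\bullet$.
   Context: Fix $\mathbb F\in\{\mathbb R,\mathbb C\}$. For an $m\times n$ matrix $A$, the Schur norm is $\|A\|_\bullet=\sup\{\|A\bullet X\|: X\in M_{m,n}(\mathbb F),\ \|X\|\le1\}$, where $A\bullet X=[a_{ij}x_{ij}]$ is the entrywise product and $\|\cdot\|$ is the operator norm $\ell^2_n\to\ell^2_m$. *)

From HB Require Import structures.
From mathcomp Require Import all_boot all_order all_algebra.
From mathcomp Require Import classical_sets reals.
From mathcomp Require Import complex.

Set Implicit Arguments.
Unset Strict Implicit.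
Unset Printing Implicit Defensive.
Import Order.TTheory GRing.Theory Num.Theory.
Local Open Scope ring_scope.
Local Open Scope classical_set_scope.

(* Generic setting: a scalar field F (here R or R[i]) with an absolute value
   nm : F -> R valued in the reals R. *)
Section SchurNorm.
Context {R : realType} {F : pzRingType} (nm : F -> R).

Definition vnorm {n : nat} (x : 'cV[F]_n) : R :=
  Num.sqrt (\sum_(i < n) nm (x i 0) ^+ 2).

Definition opnorm {m n : nat} (A : 'M[F]_(m, n)) : R :=
  sup [set vnorm (A *m x) | x in [set x : 'cV[F]_n | vnorm x <= 1]].

Definition schur_prod {m n : nat} (A X : 'M[F]_(m, n)) : 'M[F]_(m, n) :=
  \matrix_(i, j) (A i j * X i j).

Definition schur_norm {m n : nat} (A : 'M[F]_(m, n)) : R :=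
  sup [set opnorm (schur_prod A X) | X in [set X : 'M[F]_(m, n) | opnorm X <= 1]].

End SchurNorm.

Definition mx_of_nats {F : pzRingType} (m n : nat) (rows : seq (seq nat))
  : 'M[F]_(m, n) :=
  \matrix_(i < m, j < n) ((nth 0%N (nth [::] rows i) j)%:R).

Definition A4 {F : pzRingType} : 'M[F]_4 :=
  mx_of_nats 4 4 [:: [:: 1; 1; 1; 1];
                     [:: 0; 1; 0; 0];
                     [:: 0; 0; 1; 0];
                     [:: 0; 0; 0; 1]]%N.

Definition B3 {F : pzRingType} : 'M[F]_3 :=
  mx_of_nats 3 3 [:: [:: 1; 1; 0];
                     [:: 1; 1; 1];
                     [:: 0; 1; 0]]%N.

Definition schur_norm_R {R : realType} {m n : nat} (A : 'M[R]_(m, n)) : R :=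
  schur_norm (@Num.norm _ R) A.

Definition schur_norm_C {R : realType} {m n : nat} (A : 'M[R[i]]_(m, n)) : R :=
  schur_norm (@ComplexField.Normc.normc R) A.

From mathcomp Require Import all_boot all_order all_algebra.
From mathcomp Require Import classical_sets reals.
From mathcomp Require Import complex.
From mathcomp Require Import ring lra.
Import Order.TTheory GRing.Theory Num.Theory.
Local Open Scope ring_scope.

(* Upper bound: B3 = U V^T with real U, V whose rows all have squared length at
   most c = 2507/2000. Writing u_l, v_l for the columns of U, V, one has
   (B3 o X) x = sum_l diag(u_l) X diag(v_l) x, so Cauchy-Schwarz over l and
   ||X|| <= 1 give ||(B3 o X) x|| <= c ||x||, whence ||B3||_o <= c.
   Lower bound: an explicit real orthogonal 4x4 matrix X, which has norm 1 over
   R and over C alike, and a unit vector x with ||(A4 o X) x||^2 > c^2. *)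

Lemma CauchySchwarz_sum {R : realFieldType} {k} (p q : 'I_k -> R) :
  (\sum_l p l * q l) ^+ 2 <= (\sum_l p l ^+ 2) * (\sum_l q l ^+ 2).
Proof.
set P := \sum_l p l ^+ 2; set Q := \sum_l q l ^+ 2; set S := \sum_l p l * q l.
have P_ge0 : 0 <= P by apply: sumr_ge0 => l _; apply: sqr_ge0.
have [P0|P_neq0] := eqVneq P 0.
  have p0 l : p l = 0.
    apply/eqP; rewrite -sqrf_eq0; apply/eqP.
    by apply: (psumr_eq0P _ P0) => // l' _; apply: sqr_ge0.
  by rewrite /S big1 ?P0 ?expr0n ?mul0r // => l _; rewrite p0 mul0r.
have P_gt0 : 0 < P by rewrite lt_neqAle eq_sym P_neq0.
(* Expand the nonnegative quadratic [sum_l (t p_l - q_l)^2] at [t = S / P]. *)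
have : 0 <= \sum_l (S / P * p l - q l) ^+ 2 by apply: sumr_ge0 => l _; apply: sqr_ge0.
have -> : \sum_l (S / P * p l - q l) ^+ 2 = Q - S ^+ 2 / P.
  transitivity ((S / P) ^+ 2 * P - 2 * (S / P) * S + Q); last by field.
  rewrite /P /Q /S !mulr_sumr -sumrN -!big_split /=.
  by apply: eq_bigr => l _; ring.
by rewrite subr_ge0 ler_pdivrMr // mulrC.
Qed.

Definition orthogonal_mx {R : pzRingType} {n} (Q : 'M[R]_n) :=
  forall a : 'cV[R]_n, \sum_i ((Q *m a) i 0) ^+ 2 = \sum_i a i 0 ^+ 2.

Section Witnesses.
Variable R : realFieldType.

Definition ub3 (i j : nat) : R :=
  match i, j with
  | 0, 0 => 16/45 | 0, 1 => 1 | 0, _ => 16/45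
  | 1, 0 => 11636/12825 | 1, 1 => 157/285 | 1, _ => -(4564/12825)
  | _, 0 => 19/24 | _, 1 => 0 | _, _ => 19/24
  end.

Definition UB3 : 'M[R]_3 := \matrix_(i, j) ub3 i j.

Definition VB3 : 'M[R]_3 := \matrix_(i, j) (if val j == 2 then - UB3 i j else UB3 i j).

Definition xa4 (i j : nat) : R :=
  match i, j with
  | 0, 0 => 73/127 | 0, _ => 60/127
  | _, 0 => -(60/127)
  | _, _ => if i == j then 109/127 else -(18/127)
  end.

Definition XA4 : 'M[R]_4 := \matrix_(i, j) xa4 i j.

Definition xA4 : 'cV[R]_4 := \col_i (if val i == 0 then 7/20 else 27/50).

Lemma B3_factor i j : B3 i j = \sum_l UB3 i l * VB3 j l.
Proof.
rewrite !big_ord_recr big_ord0 !mxE /=.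
by case: i => -[|[|[|?]]] ? //; case: j => -[|[|[|?]]] ? //; rewrite /ub3 /=; field.
Qed.

Lemma UB3_row_norm2_le i : \sum_l UB3 i l ^+ 2 <= 2507/2000.
Proof.
rewrite !big_ord_recr big_ord0 !mxE /=.
by case: i => -[|[|[|?]]] ? //; rewrite /ub3 /=; lra.
Qed.

Lemma VB3_row_norm2_le j : \sum_l VB3 j l ^+ 2 <= 2507/2000.
Proof.
rewrite !big_ord_recr big_ord0 !mxE /=.
by case: j => -[|[|[|?]]] ? //; rewrite /ub3 /=; lra.
Qed.

Lemma XA4_orthogonal : orthogonal_mx XA4.
Proof. by move=> a; rewrite !(big_ord_recr, big_ord0, mxE) /= /xa4 /=; field. Qed.

Lemma xA4_norm2_le1 : \sum_i xA4 i 0 ^+ 2 <= 1.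
Proof. rewrite !big_ord_recr big_ord0 !mxE /=; lra. Qed.

Lemma schur_A4_XA4_xA4_gt : (2507/2000) ^+ 2 <
  \sum_i ((schur_prod A4 XA4 *m xA4) i 0) ^+ 2 :> R.
Proof. rewrite !(big_ord_recr, big_ord0, mxE) /= /xa4 /=; lra. Qed.

End Witnesses.

Section AbsoluteValue.
Local Open Scope classical_set_scope.
Variables (R : realType) (F : comPzRingType) (nm : F -> R) (emb : {rmorphism R -> F}).
Hypotheses (nm_ge0 : forall x, 0 <= nm x)
           (nmD : forall x y, nm (x + y) <= nm x + nm y)
           (nmM : forall x y, nm (x * y) = nm x * nm y)
           (nm_emb : forall r, nm (emb r) = `|r|).

Lemma nm0 : nm 0 = 0.
Proof. by rewrite -(rmorph0 emb) nm_emb normr0. Qed.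

Lemma nm1 : nm 1 = 1.
Proof. by rewrite -(rmorph1 emb) nm_emb normr1. Qed.

Lemma ler_nm_sum {I : finType} (f : I -> F) : nm (\sum_i f i) <= \sum_i nm (f i).
Proof.
elim/big_rec2: _ => [|i y x _ le_xy]; first by rewrite nm0.
by apply: le_trans (nmD _ _) _; rewrite lerD2l.
Qed.

Definition vnorm2 {n} (x : 'cV[F]_n) : R := \sum_i nm (x i 0) ^+ 2.

Lemma vnorm2_ge0 n (x : 'cV[F]_n) : 0 <= vnorm2 x.
Proof. by apply: sumr_ge0 => i _; apply: sqr_ge0. Qed.

Lemma vnormE n (x : 'cV[F]_n) : vnorm nm x = Num.sqrt (vnorm2 x).
Proof. by []. Qed.

Lemma vnorm_ge0 n (x : 'cV[F]_n) : 0 <= vnorm nm x.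
Proof. exact: sqrtr_ge0. Qed.

Lemma sqr_vnorm n (x : 'cV[F]_n) : vnorm nm x ^+ 2 = vnorm2 x.
Proof. by rewrite sqr_sqrtr ?vnorm2_ge0. Qed.

Lemma ler_vnorm {n m} (x : 'cV[F]_n) (y : 'cV[F]_m) :
  (vnorm nm x <= vnorm nm y) = (vnorm2 x <= vnorm2 y).
Proof. by rewrite ler_sqrt ?vnorm2_ge0. Qed.

Lemma vnorm0 n : vnorm nm (0 : 'cV[F]_n) = 0.
Proof. by rewrite vnormE /vnorm2 big1 ?sqrtr0 // => i _; rewrite mxE nm0 expr0n. Qed.

Lemma vnormZ n a (x : 'cV[F]_n) : vnorm nm (a *: x) = nm a * vnorm nm x.
Proof.
rewrite !vnormE; have -> : vnorm2 (a *: x) = nm a ^+ 2 * vnorm2 x.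
  by rewrite mulr_sumr; apply: eq_bigr => i _; rewrite mxE nmM exprMn.
by rewrite sqrtrM ?sqr_ge0 // sqrtr_sqr ger0_norm.
Qed.

Lemma vnorm_delta {n} (j : 'I_n) : vnorm nm (delta_mx j 0) = 1.
Proof.
rewrite vnormE /vnorm2 (bigD1 j) //= big1 => [|i /negbTE neq_ij].
  by rewrite !mxE !eqxx nm1 expr1n addr0 sqrtr1.
by rewrite !mxE neq_ij nm0 expr0n.
Qed.

Lemma nm_coef_le_vnorm {n} (x : 'cV[F]_n) i : nm (x i 0) <= vnorm nm x.
Proof.
rewrite -ler_sqr ?nnegrE ?vnorm_ge0 // sqr_vnorm /vnorm2 (bigD1 i) //= lerDl.
by apply: sumr_ge0 => j _; apply: sqr_ge0.
Qed.

Lemma vnorm_mulmx_le_entrywise m n (M : 'M[F]_(m, n)) (K : 'I_m -> 'I_n -> R) x :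
  (forall i j, nm (M i j) <= K i j) -> vnorm nm x <= 1 ->
  vnorm nm (M *m x) <= Num.sqrt (\sum_i (\sum_j K i j) ^+ 2).
Proof.
move=> le_MK le_x1; rewrite vnormE ler_sqrt; last first.
  by apply: sumr_ge0 => i _; apply: sqr_ge0.
apply: ler_sum => i _; rewrite mxE.
have le_row : nm (\sum_j M i j * x j 0) <= \sum_j K i j.
  apply: le_trans (ler_nm_sum _) _; apply: ler_sum => j _.
  rewrite nmM -[leRHS]mulr1 ler_pM ?le_MK //.
  exact: le_trans (nm_coef_le_vnorm x j) le_x1.
by rewrite ler_sqr ?nnegrE ?(le_trans (nm_ge0 _) le_row).
Qed.

Lemma has_ubound_opnorm_set m n (M : 'M[F]_(m, n)) :
  has_ubound [set vnorm nm (M *m x) | x in [set x : 'cV[F]_n | vnorm nm x <= 1]].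
Proof.
exists (Num.sqrt (\sum_i (\sum_j nm (M i j)) ^+ 2)).
by move=> _ [x le_x1 <-]; apply: vnorm_mulmx_le_entrywise.
Qed.

Lemma vnorm_mulmx_le_opnorm {m n} (M : 'M[F]_(m, n)) x :
  vnorm nm x <= 1 -> vnorm nm (M *m x) <= opnorm nm M.
Proof. by move=> le_x1; apply: ub_le_sup; [exact: has_ubound_opnorm_set | exists x]. Qed.

Lemma opnorm_le m n (M : 'M[F]_(m, n)) c :
  (forall x, vnorm nm x <= 1 -> vnorm nm (M *m x) <= c) -> opnorm nm M <= c.
Proof.
move=> le_Mc; apply: ge_sup; last by move=> _ [x le_x1 <-]; apply: le_Mc.
by exists (vnorm nm (M *m 0)), 0 => //=; rewrite vnorm0 ler01.
Qed.

Lemma opnorm_le1_contraction m n (M : 'M[F]_(m, n)) z :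
  opnorm nm M <= 1 -> vnorm nm (M *m z) <= vnorm nm z.
Proof.
move=> le_M1; apply/ler_addgt0Pr => e e_gt0.
have t_gt0 : 0 < vnorm nm z + e by rewrite ltr_pwDr ?vnorm_ge0.
(* Rescale [z] into the unit ball by the real factor [1 / (|z| + e)]. *)
have nm_inv : nm (emb (vnorm nm z + e)^-1) = (vnorm nm z + e)^-1.
  by rewrite nm_emb ger0_norm // invr_ge0 ltW.
have le_z1 : vnorm nm (emb (vnorm nm z + e)^-1 *: z) <= 1.
  by rewrite vnormZ nm_inv mulrC ler_pdivrMr // mul1r lerDl ltW.
have := le_trans (vnorm_mulmx_le_opnorm M _ le_z1) le_M1.
by rewrite -scalemxAr vnormZ nm_inv mulrC ler_pdivrMr // mul1r.
Qed.

Lemma nm_coef_le_opnorm {m n} (M : 'M[F]_(m, n)) i j : nm (M i j) <= opnorm nm M.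
Proof.
have := vnorm_mulmx_le_opnorm M (delta_mx j 0); rewrite vnorm_delta lexx => /(_ isT).
apply: le_trans; rewrite -colE.
by have := nm_coef_le_vnorm (col j M) i; rewrite mxE.
Qed.

Lemma has_ubound_schur_norm_set m n (A : 'M[F]_(m, n)) :
  has_ubound [set opnorm nm (schur_prod A X) |
              X in [set X : 'M[F]_(m, n) | opnorm nm X <= 1]].
Proof.
exists (Num.sqrt (\sum_i (\sum_j nm (A i j)) ^+ 2)).
move=> _ [X le_X1 <-]; apply: opnorm_le => x le_x1.
apply: vnorm_mulmx_le_entrywise => // i j.
rewrite mxE nmM -[leRHS]mulr1 ler_pM //.
exact: le_trans (nm_coef_le_opnorm X i j) le_X1.
Qed.

Lemma vnorm_schur_mulmx_le_schur_norm {m n} (A X : 'M[F]_(m, n)) x :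
  opnorm nm X <= 1 -> vnorm nm x <= 1 ->
  vnorm nm (schur_prod A X *m x) <= schur_norm nm A.
Proof.
move=> le_X1 le_x1; apply: le_trans (vnorm_mulmx_le_opnorm _ _ le_x1) _.
by apply: ub_le_sup; [exact: has_ubound_schur_norm_set | exists X].
Qed.

Lemma schur_norm_le m n (A : 'M[F]_(m, n)) c :
  (forall X x, opnorm nm X <= 1 -> vnorm nm x <= 1 ->
     vnorm nm (schur_prod A X *m x) <= c) -> schur_norm nm A <= c.
Proof.
move=> le_Ac; apply: ge_sup => [|_ [X le_X1 <-]]; last first.
  by apply: opnorm_le => x; apply: le_Ac.
exists (opnorm nm (schur_prod A 0)), 0 => //=.
by apply: opnorm_le => x _; rewrite mul0mx vnorm0 ler01.
Qed.

Definition scale_entries {n} (v : 'I_n -> R) (x : 'cV[F]_n) : 'cV[F]_n :=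
  \col_j (emb (v j) * x j 0).

Lemma vnorm2_scale_entries n (v : 'I_n -> R) x :
  vnorm2 (scale_entries v x) = \sum_j v j ^+ 2 * nm (x j 0) ^+ 2.
Proof.
by apply: eq_bigr => j _; rewrite mxE nmM nm_emb exprMn real_normK ?num_real.
Qed.

Section Factorization.
Variables (m n k : nat) (A : 'M[F]_(m, n)) (U : 'M[R]_(m, k)) (V : 'M[R]_(n, k)).
Hypothesis A_factor : forall i j, A i j = emb (\sum_l U i l * V j l).

Lemma schur_factor_mulmxE X x i :
  (schur_prod A X *m x) i 0 =
  \sum_l emb (U i l) * (X *m scale_entries (fun j => V j l) x) i 0.
Proof.
rewrite mxE; under eq_bigr do rewrite mxE A_factor rmorph_sum !mulr_suml.
rewrite exchange_big; apply: eq_bigr => l _; rewrite mxE mulr_sumr.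
by apply: eq_bigr => j _; rewrite mxE rmorphM; ring.
Qed.

Lemma sqr_nm_schur_factor_mulmx_le X x i :
  nm ((schur_prod A X *m x) i 0) ^+ 2 <=
  (\sum_l U i l ^+ 2) * \sum_l nm ((X *m scale_entries (fun j => V j l) x) i 0) ^+ 2.
Proof.
pose y l := nm ((X *m scale_entries (fun j => V j l) x) i 0).
have -> : \sum_l U i l ^+ 2 = \sum_l `|U i l| ^+ 2.
  by apply: eq_bigr => l _; rewrite real_normK ?num_real.
apply: le_trans (CauchySchwarz_sum (fun l => `|U i l|) y).
rewrite ler_sqr ?nnegrE //; last by apply: sumr_ge0 => l _; rewrite mulr_ge0 ?nm_ge0.
rewrite schur_factor_mulmxE; apply: le_trans (ler_nm_sum _) _.
by apply: ler_sum => l _; rewrite nmM nm_emb.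
Qed.

Lemma vnorm2_schur_factor_le a2 b2 X x :
  0 <= a2 -> (forall i, \sum_l U i l ^+ 2 <= a2) ->
  (forall j, \sum_l V j l ^+ 2 <= b2) ->
  opnorm nm X <= 1 -> vnorm2 (schur_prod A X *m x) <= a2 * b2 * vnorm2 x.
Proof.
move=> a2_ge0 le_U le_V le_X1.
pose w l := scale_entries (fun j => V j l) x.
apply: le_trans (ler_sum _ (fun i _ => sqr_nm_schur_factor_mulmx_le X x i)) _.
have le_a2 : \sum_i (\sum_l U i l ^+ 2) * (\sum_l nm ((X *m w l) i 0) ^+ 2)
    <= a2 * \sum_l vnorm2 (X *m w l).
  rewrite exchange_big mulr_sumr; apply: ler_sum => i _.
  by rewrite ler_wpM2r ?sumr_ge0 // => l _; apply: sqr_ge0.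
apply: le_trans le_a2 _; rewrite -mulrA ler_wpM2l //.
have le_w l : vnorm2 (X *m w l) <= vnorm2 (w l).
  by rewrite -ler_vnorm; apply: opnorm_le1_contraction.
apply: le_trans (ler_sum _ (fun l _ => le_w l)) _.
rewrite /w; under eq_bigr do rewrite vnorm2_scale_entries.
rewrite exchange_big mulr_sumr; apply: ler_sum => j _.
by rewrite -mulr_suml ler_wpM2r ?le_V ?sqr_ge0.
Qed.

Lemma schur_norm_factor_le a2 b2 :
  0 <= a2 -> 0 <= b2 -> (forall i, \sum_l U i l ^+ 2 <= a2) ->
  (forall j, \sum_l V j l ^+ 2 <= b2) -> schur_norm nm A <= Num.sqrt (a2 * b2).
Proof.
move=> a2_ge0 b2_ge0 le_U le_V; apply: schur_norm_le => X x le_X1 le_x1.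
rewrite vnormE ler_sqrt ?mulr_ge0 //.
apply: le_trans (@vnorm2_schur_factor_le a2 b2 X x a2_ge0 le_U le_V le_X1) _.
by rewrite -[leRHS]mulr1 ler_wpM2l ?mulr_ge0 // -sqr_vnorm expr_le1 ?vnorm_ge0.
Qed.
End Factorization.

Lemma vnorm_map_mx n (y : 'cV[R]_n) :
  vnorm nm (map_mx emb y) = Num.sqrt (\sum_i y i 0 ^+ 2).
Proof.
by congr Num.sqrt; apply: eq_bigr => i _; rewrite mxE nm_emb real_normK ?num_real.
Qed.

Lemma schur_prod_map_mx m n (A X : 'M[R]_(m, n)) :
  schur_prod (map_mx emb A) (map_mx emb X) = map_mx emb (schur_prod A X).
Proof. by apply/matrixP => i j; rewrite !mxE rmorphM. Qed.

Lemma map_mx_of_nats m n rows :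
  map_mx emb (mx_of_nats m n rows) = mx_of_nats m n rows.
Proof. by apply/matrixP => i j; rewrite !mxE rmorph_nat. Qed.

Lemma schur_norm_B3_lt_A4 :
  (forall n (Q : 'M[R]_n), orthogonal_mx Q ->
     forall z, vnorm nm (map_mx emb Q *m z) = vnorm nm z) ->
  schur_norm nm (B3 : 'M[F]_3) < schur_norm nm (A4 : 'M[F]_4).
Proof.
move=> vnorm_orthogonal.
have le_B3 : schur_norm nm (B3 : 'M[F]_3) <= Num.sqrt ((2507/2000) * (2507/2000)).
  apply: (@schur_norm_factor_le _ _ _ _ (UB3 R) (VB3 R)).
  - by move=> i j; rewrite /B3 -map_mx_of_nats mxE B3_factor.
  - lra.
  - lra.
  - exact: UB3_row_norm2_le.
  - exact: VB3_row_norm2_le.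
have XA4_le1 : opnorm nm (map_mx emb (XA4 R)) <= 1.
  by apply: opnorm_le => z; rewrite vnorm_orthogonal //; apply: XA4_orthogonal.
have xA4_le1 : vnorm nm (map_mx emb (xA4 R)) <= 1.
  by rewrite vnorm_map_mx -sqrtr1 ler_sqrt // xA4_norm2_le1.
have := vnorm_schur_mulmx_le_schur_norm A4 _ _ XA4_le1 xA4_le1.
rewrite /A4 -map_mx_of_nats schur_prod_map_mx -map_mxM vnorm_map_mx.
apply: lt_le_trans; apply: le_lt_trans le_B3 _.
have lt_c := schur_A4_XA4_xA4_gt R.
rewrite -expr2 ltr_sqrt; first exact: lt_c.
exact: le_lt_trans (sqr_ge0 _) lt_c.
Qed.

End AbsoluteValue.

Lemma vnorm_orthogonal_real (R : realType) n (Q : 'M[R]_n) :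
  orthogonal_mx Q -> forall z,
  vnorm (@Num.norm _ R) (map_mx (idfun : {rmorphism R -> R}) Q *m z) =
  vnorm (@Num.norm _ R) z.
Proof.
move=> Q_orth z; have -> : map_mx idfun Q = Q by apply/matrixP => i j; rewrite mxE.
rewrite /vnorm; congr Num.sqrt.
have sqr_abs (y : 'cV[R]_n) : \sum_i `|y i 0| ^+ 2 = \sum_i y i 0 ^+ 2.
  by apply: eq_bigr => i _; rewrite real_normK ?num_real.
by rewrite !sqr_abs Q_orth.
Qed.

Section ComplexNorm.
Variable R : realType.
Local Notation normc := (@ComplexField.Normc.normc R).
Local Notation Re := (@complex.Re R).
Local Notation Im := (@complex.Im R).

Lemma normc_ge0 (x : R[i]) : 0 <= normc x.
Proof. by case: x => a b; apply: sqrtr_ge0. Qed.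

Lemma sqr_normc (w : R[i]) : normc w ^+ 2 = Re w ^+ 2 + Im w ^+ 2.
Proof. by case: w => a b /=; rewrite sqr_sqrtr // addr_ge0 ?sqr_ge0. Qed.

Lemma normc_real (r : R) : normc (real_complex R r) = `|r|.
Proof. by rewrite /= expr0n /= addr0 sqrtr_sqr. Qed.

Lemma map_Re_real_mulmx n (Q : 'M[R]_n) (z : 'cV[R[i]]_n) :
  map_mx Re (map_mx (real_complex R) Q *m z) = Q *m map_mx Re z.
Proof.
apply/matrixP => i j; rewrite !mxE raddf_sum; apply: eq_bigr => l _.
by rewrite !mxE; case: (z l j) => a b /=; ring.
Qed.

Lemma map_Im_real_mulmx n (Q : 'M[R]_n) (z : 'cV[R[i]]_n) :
  map_mx Im (map_mx (real_complex R) Q *m z) = Q *m map_mx Im z.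
Proof.
apply/matrixP => i j; rewrite !mxE raddf_sum; apply: eq_bigr => l _.
by rewrite !mxE; case: (z l j) => a b /=; ring.
Qed.

(* A real orthogonal matrix acts separately on real and imaginary parts. *)
Lemma vnorm_orthogonal_complex n (Q : 'M[R]_n) :
  orthogonal_mx Q ->
  forall z, vnorm normc (map_mx (real_complex R) Q *m z) = vnorm normc z.
Proof.
move=> Q_orth z; rewrite /vnorm; congr Num.sqrt.
transitivity (\sum_i ((map_mx Re (map_mx (real_complex R) Q *m z)) i 0) ^+ 2 +
              \sum_i ((map_mx Im (map_mx (real_complex R) Q *m z)) i 0) ^+ 2).
  by rewrite -big_split; apply: eq_bigr => i _; rewrite sqr_normc !mxE.
rewrite map_Re_real_mulmx map_Im_real_mulmx !Q_orth -big_split.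
by apply: eq_bigr => i _; rewrite sqr_normc !mxE.
Qed.

End ComplexNorm.

Theorem proposition5p4 (R : realType) :
  schur_norm_R (@B3 R) < schur_norm_R (@A4 R) /\
  schur_norm_C (@B3 R[i]) < schur_norm_C (@A4 R[i]).
Proof.
split.
- apply: (@schur_norm_B3_lt_A4 R R _ idfun).
  + exact: normr_ge0.
  + exact: ler_normD.
  + exact: normrM.
  + by [].
  + exact: vnorm_orthogonal_real.
- apply: (@schur_norm_B3_lt_A4 R R[i] _ (real_complex R)).
  + exact: normc_ge0.
  + exact: le_normcD.
  + exact: ComplexField.Normc.normcM.
  + exact: normc_real.
  + exact: vnorm_orthogonal_complex.
Qed.
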